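(* Let $q\in\mathbb{C}^*$, $\lambda\in\mathbb{C}^*$, $a,b\in\mathbb{C}$, and let $\lambda^{\frac12}$ denote a square root of $\lambda$. Then $\Omega_{\mathcal{L}}(\lambda,a,b)\cong\Omega_{\mathcal{R}}(\lambda^{\frac12},a,2b)$ as $\mathcal{L}$-modules, where $\Omega_{\mathcal{R}}(\lambda^{\frac12},a,2b)$ is regarded as an $\mathcal{L}$-module via $\tau$.
   Context: Let $\mathbb{Z}_+=\{0,1,2,\dots\}$. For $s\in\{0,\frac12\}$ let $S(q)$ be the Lie superalgebra over $\mathbb{C}$ with even basis $\{L_{m,i}\mid m\in\mathbb{Z},i\in\mathbb{Z}_+\}$, odd basis $\{G_{l,j}\mid l\in s+\mathbb{Z},j\in\mathbb{Z}_+\}$ and brackets $[L_{m,i},L_{n,j}]=(n(i+q)-m(j+q))L_{m+n,i+j}$, $[L_{m,i},G_{l,j}]=(l(i+q)-m(j+\frac{q}{2}))G_{m+l,i+j}$, $[G_{l,i},G_{r,j}]=2qL_{l+r,i+j}$. For $s=0$ this is $\mathcal{R}$ (Ramond-Block), for $s=\frac12$ it is $\mathcal{L}$ (Neveu-Schwarz-Block), with the same $q$. $\tau:\mathcal{L}\to\mathcal{R}$ is the injective Lie superalgebra homomorphism with $\tau(L_{m,i})=\frac12L_{2m,i}$, $\tau(G_{r,j})=\frac{1}{\sqrt2}G_{2r,j}$. Modules are supermodules; $\delta$ is the Kronecker delta. For $\nu\in\mathbb{C}^*$, $a,c\in\mathbb{C}$, $\Omega_{\mathcal{R}}(\nu,a,c)=\mathbb{C}[t^2]\oplus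 t\mathbb{C}[t^2]$ (even part $\mathbb{C}[t^2]$, odd part $t\mathbb{C}[t^2]$) is the $\mathcal{R}$-module with, for $f\in\mathbb{C}[t^2]$, $m\in\mathbb{Z}$, $i\in\mathbb{Z}_+$: $L_{m,i}f(t^2)=\nu^m(\delta_{i,0}(t^2-mqa)+\delta_{q,-1}\delta_{i,1}c)f(t^2-mq)$; $L_{m,i}tf(t^2)=\nu^m t(\delta_{i,0}(t^2-mqa-\frac{mq}{2})+\delta_{q,-1}\delta_{i,1}c)f(t^2-mq)$; $G_{m,i}f(t^2)=\nu^m\delta_{i,0}tf(t^2-mq)$; $G_{m,i}tf(t^2)=q\nu^m(\delta_{i,0}(t^2-2mqa)+2\delta_{q,-1}\delta_{i,1}c)f(t^2-mq)$. For $\lambda\in\mathbb{C}^*$, $a,b\in\mathbb{C}$, $\Omega_{\mathcal{L}}(\lambda,a,b)=\mathbb{C}[t]\oplus\mathbb{C}[x]$ (even part $\mathbb{C}[t]$, odd part $\mathbb{C}[x]$) is the $\mathcal{L}$-module with, for $f\in\mathbb{C}[t]$, $g\in\mathbb{C}[x]$, $m\in\mathbb{Z}$, $r\in\frac12+\mathbb{Z}$, $i\in\mathbb{Z}_+$: $L_{m,i}f(t)=\lambda^m(\delta_{i,0}(t-mqa)+\delta_{q,-1}\delta_{i,1}b)f(t-mq)$; $L_{m,i}g(x)=\lambda^m(\delta_{i,0}(x-mqa-\frac{mq}{2})+\delta_{q,-1}\delta_{i,1}b)g(x-mq)$; $G_{r,i}f(t)=\lambda^{r-\frac12}\delta_{i,0}f(x-rq)$;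 $G_{r,i}g(x)=q\lambda^{r+\frac12}(\delta_{i,0}(t-2rqa)+2\delta_{q,-1}\delta_{i,1}b)g(t-rq)$. *)

From HB Require Import structures.
From mathcomp Require Import all_boot all_order all_algebra.
From mathcomp Require Import complex.
From mathcomp Require Import reals Rstruct.
Set Implicit Arguments. Unset Strict Implicit. Unset Printing Implicit Defensive.
Import Order.TTheory GRing.Theory Num.Theory.
Local Open Scope ring_scope.

Notation C := (Rdefinitions.R)[i].

Definition delta (b : bool) : C := b%:R.

Definition shift (s : C) (f : {poly C}) : {poly C} := f \Po ('X - s%:P).

(* Both modules have underlying superspace {poly C} * {poly C}:
   first component = even part, second = odd part.
   For Omega_R(nu,a,c) a pair (f,g) represents f(t^2) + t g(t^2)
   (f, g written as polynomials in the variable T = t^2).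
   For Omega_L(lambda,a,b) a pair (f,g) represents f(t) + g(x). *)
Definition smod : Type := ({poly C} * {poly C})%type.

Definition OmR_L (q nu a c : C) (m : int) (i : nat) (v : smod) : smod :=
  (nu ^ m *: ((delta (i == 0%N) *: ('X - (m%:~R * q * a)%:P)
               + (delta (q == -1) * delta (i == 1%N) * c)%:P) * shift (m%:~R * q) v.1),
   nu ^ m *: ((delta (i == 0%N) *: ('X - (m%:~R * q * a + m%:~R * q / 2)%:P)
               + (delta (q == -1) * delta (i == 1%N) * c)%:P) * shift (m%:~R * q) v.2)).

Definition OmR_G (q nu a c : C) (m : int) (i : nat) (v : smod) : smod :=
  (q * nu ^ m *: ((delta (i == 0%N) *: ('X - (2 * m%:~R * q * a)%:P)
               + (2 * delta (q == -1) * delta (i == 1%N) * c)%:P) * shift (m%:~R * q) v.2),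
   nu ^ m * delta (i == 0%N) *: shift (m%:~R * q) v.1).

Definition OmL_L (q lam a b : C) (m : int) (i : nat) (v : smod) : smod :=
  (lam ^ m *: ((delta (i == 0%N) *: ('X - (m%:~R * q * a)%:P)
               + (delta (q == -1) * delta (i == 1%N) * b)%:P) * shift (m%:~R * q) v.1),
   lam ^ m *: ((delta (i == 0%N) *: ('X - (m%:~R * q * a + m%:~R * q / 2)%:P)
               + (delta (q == -1) * delta (i == 1%N) * b)%:P) * shift (m%:~R * q) v.2)).

(* G_{r,i} with r = k + 1/2, k in Z  (so r - 1/2 = k, r + 1/2 = k + 1) *)
Definition OmL_G (q lam a b : C) (k : int) (i : nat) (v : smod) : smod :=
  let r : C := k%:~R + 2^-1 in
  (q * lam ^ (k + 1) *: ((delta (i == 0%N) *: ('X - (2 * r * q * a)%:P)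
               + (2 * delta (q == -1) * delta (i == 1%N) * b)%:P) * shift (r * q) v.2),
   lam ^ k * delta (i == 0%N) *: shift (r * q) v.1).

(* tau(L_{m,i}) = 1/2 L_{2m,i},  tau(G_{r,j}) = 1/sqrt2 G_{2r,j}, 2r = 2k+1 *)
Definition tauOmR_L (q nu a c : C) (m : int) (i : nat) (v : smod) : smod :=
  let w := OmR_L q nu a c (2 * m) i v in (2^-1 *: w.1, 2^-1 *: w.2).

Definition tauOmR_G (q nu a c : C) (k : int) (i : nat) (v : smod) : smod :=
  let w := OmR_G q nu a c (2 * k + 1) i v in ((sqrtC 2)^-1 *: w.1, (sqrtC 2)^-1 *: w.2).

Definition clinear (f : {poly C} -> {poly C}) : Prop :=
  forall (s : C) (u w : {poly C}), f (s *: u + w) = s *: f u + f w.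

Definition L_iso
  (L1 G1 L2 G2 : int -> nat -> smod -> smod) : Prop :=
  exists (phi0 phi1 : {poly C} -> {poly C}),
    [/\ clinear phi0 /\ clinear phi1, bijective phi0, bijective phi1,
        (forall m i v, (phi0 (L1 m i v).1, phi1 (L1 m i v).2)
                       = L2 m i (phi0 v.1, phi1 v.2)) &
        (forall k i v, (phi0 (G1 k i v).1, phi1 (G1 k i v).2)
                       = G2 k i (phi0 v.1, phi1 v.2))].

From mathcomp Require Import all_boot all_order all_algebra complex reals Rstruct.
From mathcomp Require Import ring.
Import GRing.Theory Num.Theory.
Local Open Scope ring_scope.

(* Write T for the variable of the even and odd parts of Omega_R, i.e. T = t^2.
   The substitution f(t) |-> f(T/2) turns the shift by mq into the shift by 2mq
   and the factor t - mqa into (T - 2mqa)/2, which is exactly the action of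
   tau(L_{m,i}) = L_{2m,i}/2 on Omega_R (the halving is why its constant is 2b).
   On the odd part the same substitution must be scaled by mu/sqrt 2: this
   absorbs the factor 1/sqrt 2 of tau(G_{r,j}) and the discrepancy
   lambda^{r+1/2} = mu^{2r+1} versus mu^{2r} in the G-actions. *)

Lemma two_neq0 : (2 : C) != 0.
Proof. by rewrite pnatr_eq0. Qed.

Definition dilate (c : C) (f : {poly C}) : {poly C} := f \Po (c *: 'X).

Lemma dilate_clinear c : clinear (dilate c).
Proof. by move=> s u w; rewrite /dilate comp_polyD comp_polyZ. Qed.

Lemma dilateM c f g : dilate c (f * g) = dilate c f * dilate c g.
Proof. exact: comp_polyM. Qed.

Lemma dilateZ c k f : dilate c (k *: f) = k *: dilate c f.
Proof. exact: comp_polyZ. Qed.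

Lemma dilateK c : c != 0 -> cancel (dilate c) (dilate c^-1).
Proof.
move=> c0 f; rewrite /dilate -comp_polyA comp_polyZ comp_polyX.
by rewrite scalerA mulfV // scale1r comp_polyXr.
Qed.

Lemma dilate_bij c : c != 0 -> bijective (dilate c).
Proof.
move=> c0; exists (dilate c^-1); first exact: dilateK.
by have := @dilateK c^-1; rewrite invrK invr_eq0; apply.
Qed.

Lemma dilate_shift c s f :
  c != 0 -> dilate c (shift s f) = shift (c^-1 * s) (dilate c f).
Proof.
move=> c0; rewrite /dilate /shift -!comp_polyA; congr (f \Po _).
rewrite comp_polyB comp_polyX comp_polyC comp_polyZ comp_polyX.
by rewrite scalerBr scale_polyC mulrA mulfV // mul1r.
Qed.

Definition affine (u v : C) : {poly C} := u *: 'X + v%:P.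

Lemma affine_factorE d s k : d *: ('X - s%:P) + k%:P = affine d (k - d * s).
Proof. by rewrite /affine polyCB scalerBr scale_polyC addrAC addrA. Qed.

Lemma dilate_affine c u v : dilate c (affine u v) = affine (c * u) v.
Proof.
by rewrite /dilate /affine comp_polyD comp_polyZ comp_polyX comp_polyC scalerA mulrC.
Qed.

Lemma scale_affineM k u v F :
  k *: (affine u v * F) = affine (k * u) (k * v) * F.
Proof. by rewrite scalerAl /affine scalerDr scalerA scale_polyC. Qed.

Lemma shiftZ s k f : shift s (k *: f) = k *: shift s f.
Proof. exact: comp_polyZ. Qed.

Lemma clinear_scale (c : C) (phi : {poly C} -> {poly C}) :
  clinear phi -> clinear (fun u => c *: phi u).
Proof. by move=> lin s u w; rewrite lin scalerDr !scalerA mulrC. Qed.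

Lemma bij_scale (c : C) (phi : {poly C} -> {poly C}) :
  c != 0 -> bijective phi -> bijective (fun u => c *: phi u).
Proof.
move=> c0 [psi phiK psiK]; exists (fun u => psi (c^-1 *: u)) => u.
  by rewrite scalerA mulVf // scale1r phiK.
by rewrite psiK scalerA mulfV // scale1r.
Qed.

Definition halve_pair (c : C) (v : smod) : smod :=
  (dilate 2^-1 v.1, c *: dilate 2^-1 v.2).

Lemma sqrtC2_neq0 : sqrtC (2 : C) != 0.
Proof. by rewrite sqrtC_eq0 two_neq0. Qed.

Lemma invsqrtC2_mul (x y : C) : (sqrtC 2)^-1 * x * (y / sqrtC 2) = x * y / 2.
Proof. by rewrite -[in RHS](sqrtCK 2); field; rewrite sqrtC2_neq0. Qed.

Section Intertwining.
Variables (q lam a b mu : C).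
Hypothesis mu2 : mu ^+ 2 = lam.

Lemma exprz_double m : mu ^ (2 * m) = lam ^ m.
Proof. by rewrite -exprz_exp -mu2 exprnP. Qed.

Lemma halve_OmL_L c m i v :
  halve_pair c (OmL_L q lam a b m i v)
  = tauOmR_L q mu a (2 * b) m i (halve_pair c v).
Proof.
case: v => f g; rewrite /halve_pair /tauOmR_L /OmR_L /OmL_L /= exprz_double shiftZ.
rewrite -scalerAr !dilateZ !dilateM !dilate_shift ?invr_eq0 ?two_neq0 // invrK.
rewrite !affine_factorE !dilate_affine !scalerA !scale_affineM intrM.
congr (_, _); congr (affine _ _ * shift _ _).
all: by field.
Qed.

Hypothesis lam0 : lam != 0.

Lemma root_neq0 : mu != 0.
Proof. by apply: contraNneq lam0 => mu0; rewrite -mu2 mu0 expr0n. Qed.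

Lemma halve_OmL_G k i v :
  halve_pair (mu / sqrtC 2) (OmL_G q lam a b k i v)
  = tauOmR_G q mu a (2 * b) k i (halve_pair (mu / sqrtC 2) v).
Proof.
have lamS : lam ^ (k + 1) = lam ^ k * mu ^+ 2 by rewrite expfzDr // expr1z mu2.
have muS : mu ^ (2 * k + 1) = lam ^ k * mu.
  by rewrite expfzDr ?root_neq0 // expr1z exprz_double.
case: v => f g; rewrite /halve_pair /tauOmR_G /OmR_G /OmL_G /= lamS muS shiftZ.
rewrite -scalerAr !dilateZ !dilateM !dilate_shift ?invr_eq0 ?two_neq0 // invrK.
rewrite !affine_factorE !dilate_affine !scalerA !scale_affineM intrD intrM.
congr (_, _); [congr (affine _ _ * shift _ _) | congr (_ *: shift _ _)].
all: by rewrite ?invsqrtC2_mul; field; rewrite ?sqrtC2_neq0.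
Qed.
End Intertwining.

Theorem proposition4p3 (q lam a b mu : C) :
  q != 0 -> lam != 0 -> mu ^+ 2 = lam ->
  L_iso (OmL_L q lam a b) (OmL_G q lam a b)
        (tauOmR_L q mu a (2 * b)) (tauOmR_G q mu a (2 * b)).
Proof.
move=> _ lam0 mu2.
have half0 : (2 : C)^-1 != 0 by rewrite invr_eq0 two_neq0.
have odd0 : mu / sqrtC 2 != 0.
  by rewrite mulf_neq0 ?invr_eq0 ?sqrtC2_neq0 ?(root_neq0 _ _ mu2 lam0).
exists (dilate 2^-1), (fun g => (mu / sqrtC 2) *: dilate 2^-1 g); split.
- by split; [|apply: clinear_scale]; apply: dilate_clinear.
- exact: dilate_bij.
- exact/bij_scale/dilate_bij.
- by move=> m i v; apply: (halve_OmL_L _ _ _ _ _ mu2).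
- by move=> k i v; apply: (halve_OmL_G _ _ _ _ _ mu2 lam0).
Qed.
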